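(* Let $s\ge 1$ and $d\ge 1$ be integers. A partition $\lambda$ is an $(s,s+1)$-core partition with $d$-distinct parts if and only if $\beta(\lambda)$ is a $d$-th order twin-free subset of $\{1,2,\ldots,s-1\}$.
   Context: A partition $\lambda=(\lambda_1,\ldots,\lambda_l)$ is a finite nonincreasing sequence of positive integers (the empty partition is allowed). $\lambda$ is a partition with $d$-distinct parts if $\lambda_i-\lambda_{i+1}\ge d$ for all $1\le i\le l-1$. In the Young diagram of $\lambda$, the hook length $h(i,j)$ of box $(i,j)$ is the number of boxes directly to its right, plus the number directly below it, plus one. $\lambda$ is an $(s_1,\ldots,s_t)$-core partition if no box has hook length equal to any of $s_1,\ldots,s_t$. The set $\beta(\lambda)=\{h(i,1):1\le i\le l\}$ is the set of first-column hook lengths. A set $X\subseteq\mathbb{N}$ is a $d$-th order twin-free set if there is no $x\in X$ and $k$ with $1\le k\le d$ such that $\{x,x+k\}\subseteq X$. *)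

From mathcomp Require Import all_boot.
Set Implicit Arguments. Unset Strict Implicit. Unset Printing Implicit Defensive.

Definition is_partition (la : seq nat) : bool :=
  sorted geq la && all (fun x => 0 < x) la.

Definition d_distinct (d : nat) (la : seq nat) : bool :=
  [forall i : 'I_(size la).-1,
     d + nth 0 la i.+1 <= nth 0 la i].

(* Hook length of box (i,j) (0-indexed: row i < size la, column j < la_i):
   arm = number of boxes to the right = la_i - j - 1,
   leg = number of boxes below = #{k > i : la_k > j},
   hook = arm + leg + 1. *)
Definition hook (la : seq nat) (i j : nat) : nat :=
  (nth 0 la i - j.+1) + count (fun x => j < x) (drop i.+1 la) + 1.

Definition in_diagram (la : seq nat) (i j : nat) : bool :=
  (i < size la) && (j < nth 0 la i).

Definition is_core (ss : seq nat) (la : seq nat) : bool :=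
  [forall i : 'I_(size la), forall j : 'I_(nth 0 la i),
     hook la i j \notin ss].

Definition beta (la : seq nat) : seq nat :=
  [seq hook la i 0 | i <- iota 0 (size la)].

Definition twin_free (d : nat) (X : seq nat) : Prop :=
  ~ (exists x k, [/\ x \in X, 1 <= k <= d & x + k \in X]).

(* The first-column hook lengths are [beta_i = la_i + (l - 1 - i)], so
   consecutive ones differ by [la_i - la_(i+1) + 1]: [beta la] is d-th order
   twin-free exactly when the parts are d-distinct, and [beta la] lies in
   [1, s-1] exactly when the largest hook [h(0,0) = beta_0] is below [s].
   Since every hook is at most [h(0,0)], the latter makes [la] an
   (s, s+1)-core.  Conversely, when the parts are distinct at most one part
   equals [j+1], so along the first row the hooks decrease by at most 2 at
   each step and end at 1; if [h(0,0) >= s], one of them equals [s] or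
   [s+1]. *)

From mathcomp Require Import all_boot zify.
Set Implicit Arguments. Unset Strict Implicit.

Lemma slow_descent_hits (f : nat -> nat) (m s : nat) :
  (forall n, n < m -> f n <= (f n.+1).+2) -> f m <= s <= f 0 ->
  exists2 j, j <= m & (f j == s) || (f j == s.+1).
Proof.
elim: m f => [|m IH] f hstep /andP [hm h0].
  by exists 0 => //; rewrite eqn_leq hm h0.
have [h1 | h1] := leqP s (f 1).
  have [j hj hfj] :=
    IH (fun n => f n.+1) (fun n hn => hstep n.+1 hn) (introT andP (conj hm h1)).
  by exists j.+1.
by exists 0 => //; have := hstep 0 (ltn0Sn m); lia.
Qed.

Section Partition.

Variable la : seq nat.
Hypothesis la_part : is_partition la.

Lemma part_nth_le i j : i <= j -> j < size la -> nth 0 la j <= nth 0 la i.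
Proof.
case/andP: la_part => la_sorted _ hij hj.
apply: (sorted_leq_nth (fun a b c h1 h2 => leq_trans h2 h1) leqnn) => //.
by rewrite inE (leq_ltn_trans hij hj).
Qed.

Lemma part_nth_gt0 i : i < size la -> 0 < nth 0 la i.
Proof. by case/andP: la_part => _ /allP la_pos hi; apply/la_pos/mem_nth. Qed.

Lemma hook_first_col i : i < size la -> hook la i 0 = nth 0 la i + (size la - i.+1).
Proof.
move=> hi; have := part_nth_gt0 hi; rewrite /hook.
have -> : count (fun x => 0 < x) (drop i.+1 la) = size (drop i.+1 la).
  apply/eqP; rewrite -all_count; apply/allP => x /mem_drop.
  by case/andP: la_part => _ /allP; apply.
rewrite size_drop; lia.
Qed.

Lemma hook_le_corner i j : i < size la -> hook la i j <= hook la 0 0.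
Proof.
move=> hi; rewrite hook_first_col ?(leq_ltn_trans (leq0n i) hi) //.
have := part_nth_le (leq0n i) hi; have := part_nth_gt0 hi.
have := count_size (fun x => j < x) (drop i.+1 la).
rewrite /hook size_drop; lia.
Qed.

Lemma mem_beta x : reflect (exists2 i, i < size la & x = hook la i 0) (x \in beta la).
Proof.
apply: (iffP mapP) => [[i]|[i hi ->]]; last by exists i; rewrite ?mem_iota.
by rewrite mem_iota => /andP [_ hi] ->; exists i.
Qed.

Lemma beta_sub_iota s :
  {subset beta la <= iota 1 s.-1} <-> (0 < size la -> hook la 0 0 < s).
Proof.
split=> [hsub hl | hs x /mem_beta [i hi ->]].
  have : hook la 0 0 \in beta la by apply/mem_beta; exists 0.
  by move/hsub; rewrite mem_iota; lia.
have h0 : 0 < size la by lia.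
have := hs h0; have := hook_le_corner 0 hi; rewrite mem_iota /hook; lia.
Qed.

Lemma core_of_corner_lt s : (0 < size la -> hook la 0 0 < s) ->
  is_core [:: s; s.+1] la.
Proof.
move=> hs; apply/forallP => -[i hi]; apply/forallP => -[j _] /=.
have := hs (leq_ltn_trans (leq0n i) hi); have := hook_le_corner j hi.
by rewrite !inE => hle hlt; apply/negP => /orP [] /eqP; lia.
Qed.

Section DistinctParts.

Variable d : nat.
Hypotheses (d_gt0 : 0 < d) (la_dd : d_distinct d la).

Lemma d_distinct_ltn i j : i < j -> j < size la -> nth 0 la j < nth 0 la i.
Proof.
move=> hij hj; have hi : i < (size la).-1 by lia.
have := forallP la_dd (Ordinal hi); have := part_nth_le hij hj; rewrite /=; lia.
Qed.

Lemma d_distinct_uniq : uniq la.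
Proof.
apply: (@sorted_uniq _ (fun a b => b < a)).
- by move=> a b c /= h1 h2; apply: ltn_trans h2 h1.
- by move=> a /=; apply: ltnn.
by apply/(sortedP 0) => i hi; apply: d_distinct_ltn.
Qed.

Let a := nth 0 la 0.

Lemma hook_row0_step j : j.+1 < a -> hook la 0 j <= (hook la 0 j.+1).+2.
Proof.
move=> hj; rewrite /hook -/a.
have : count (fun x => j < x) (drop 1 la)
       <= count (fun x => j.+1 < x) (drop 1 la) + count_mem j.+1 (drop 1 la).
  by elim: (drop 1 la) => //= x t; case: (ltngtP j.+1 x); case: (ltngtP j x); lia.
rewrite (count_uniq_mem _ (drop_uniq 1 d_distinct_uniq)).
have := leq_b1 (j.+1 \in drop 1 la); lia.
Qed.

Lemma hook_row0_last : 0 < size la -> hook la 0 a.-1 = 1.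
Proof.
move=> hl; rewrite /hook -/a.
suff -> : count (fun x => a.-1 < x) (drop 1 la) = 0.
  by have := part_nth_gt0 hl; rewrite -/a; lia.
apply/eqP; rewrite -leqn0 leqNgt -has_count; apply/hasPn => x /(nthP 0) [k].
rewrite size_drop nth_drop add1n -leqNgt => hk <-.
(* [nthP] states [hk] over the eqType carrier, which [lia] does not see as [nat]. *)
have hk1 : k.+1 < size la by change (is_true (k < size la - 1)) in hk; lia.
have lt_a := d_distinct_ltn (ltn0Sn k) hk1.
by rewrite -ltnS (ltn_predK lt_a).
Qed.

Lemma corner_lt_of_core s : 0 < s -> is_core [:: s; s.+1] la ->
  0 < size la -> hook la 0 0 < s.
Proof.
move=> s_gt0 /forallP la_core hl; rewrite ltnNge; apply/negP => hs.
have a_gt0 : 0 < a by apply: part_nth_gt0.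
have step : forall n, n < a.-1 -> hook la 0 n <= (hook la 0 n.+1).+2.
  by move=> n hn; apply: hook_row0_step; lia.
have ends : hook la 0 a.-1 <= s <= hook la 0 0 by rewrite hook_row0_last // s_gt0.
have [j hj hit] := slow_descent_hits step ends.
have ja : j < a by lia.
by have := forallP (la_core (Ordinal hl)) (Ordinal ja); rewrite !inE /= hit.
Qed.

End DistinctParts.

Lemma twin_free_beta d : twin_free d (beta la) <-> d_distinct d la.
Proof.
split=> [tf | dd].
  apply/forallP => -[i hi] /=; rewrite leqNgt; apply/negP => hlt; apply: tf.
  have hi1 : i.+1 < size la by lia.
  have := part_nth_le (leqnSn i) hi1.
  exists (hook la i.+1 0), (nth 0 la i - nth 0 la i.+1).+1.
  split; first by apply/mem_beta; exists i.+1.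
    by apply/andP; split; lia.
  apply/mem_beta; exists i; first lia.
  by rewrite !hook_first_col //; lia.
move=> [x [k [/mem_beta [i hi ->] /andP [hk1 hkd] /mem_beta [j hj]]]].
rewrite !hook_first_col // => hij.
have [hji | hij'] := ltnP j i.
  have hj' : j < (size la).-1 by lia.
  by have := forallP dd (Ordinal hj'); have := part_nth_le hji hi; rewrite /=; lia.
by have := part_nth_le hij' hj; lia.
Qed.

End Partition.

Theorem mainTheorem3 (s d : nat) (hs : 1 <= s) (hd : 1 <= d) (la : seq nat) :
  is_partition la ->
  (is_core [:: s; s.+1] la /\ d_distinct d la <->
   {subset beta la <= iota 1 s.-1} /\ twin_free d (beta la)).
Proof.
move=> hp; rewrite beta_sub_iota // twin_free_beta //.
split=> [[hc dd] | [hcorner dd]]; split => //.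
- exact: (corner_lt_of_core hp hd dd hs hc).
- exact: core_of_corner_lt.
Qed.
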